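(* Let $\mathcal{X}\subset\mathbb{R}^d$ be compact, let $k$ be a positive definite kernel on $\mathcal{X}$ with $k(x,x)\le 1$ for all $x\in\mathcal{X}$, and let $f\in\mathcal{H}_k$. Assume the kernel matrices $\mathbf{K}_t$ of the query points are invertible and that all maximizers below exist. Let $x_1,\dots,x_T$ be generated by Algorithm 1: for $t=1,\dots,T$, $x_t\in\arg\max_{x\in\mathcal{X}}\, m_{t-1}(x)+\|f\|_{\mathcal{H}_k}\sigma_{t-1}(x)$, and $f(x_t)$ is observed. Fix any $\sigma>0$ and let $C_1=\frac{8}{\log(1+\sigma^{-2})}$. Then $$R_T\le \|f\|_{\mathcal{H}_k}\sqrt{T C_1\gamma_T},\qquad r_T\le \|f\|_{\mathcal{H}_k}\sqrt{\frac{C_1\gamma_T}{T}}.$$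
   Context: For query points $x_1,\dots,x_t$, $\mathbf{k}_t(x)=[k(x,x_1),\dots,k(x,x_t)]^T$, $\mathbf{K}_t=[k(x_i,x_j)]_{1\le i,j\le t}$, $\mathbf{f}_t=[f(x_1),\dots,f(x_t)]^T$, and (noise-free) $m_t(x)=\mathbf{k}_t(x)^T\mathbf{K}_t^{-1}\mathbf{f}_t$, $\sigma_t^2(x)=k(x,x)-\mathbf{k}_t(x)^T\mathbf{K}_t^{-1}\mathbf{k}_t(x)$, with $m_0\equiv 0$, $\sigma_0^2(x)=k(x,x)$. Let $x^*\in\arg\max_{x\in\mathcal{X}}f(x)$. Cumulative regret $R_T=\sum_{t=1}^T(f(x^* )-f(x_t))$; simple regret $r_T=f(x^* )-\max_{1\le t\le T}f(x_t)$. Maximum information gain: $\gamma_T=\max_{x_1,\dots,x_T\in\mathcal{X}}\frac12\log\det(\mathbf{I}_T+\sigma^{-2}\mathbf{K}_T)$. *)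

From Stdlib Require Import Reals Lra Lia Arith.
Open Scope R_scope.

Fixpoint sumR (n : nat) (f : nat -> R) : R :=
  match n with
  | O => 0
  | S m => sumR m f + f m
  end.

(** Points of R^d are represented as [nat -> R] vanishing at coordinates >= d. *)
Definition eucl_dist (d : nat) (u v : nat -> R) : R :=
  sqrt (sumR d (fun i => (u i - v i) ^ 2)).

Definition compact_Rd (d : nat) (Xs : (nat -> R) -> Prop) : Prop :=
  (forall v, Xs v -> forall i, (d <= i)%nat -> v i = 0) /\
  (forall u : nat -> (nat -> R), (forall n, Xs (u n)) ->
     exists phi : nat -> nat, (forall n, (phi n < phi (S n))%nat) /\
     exists l, Xs l /\ Un_cv (fun n => eucl_dist d (u (phi n)) l) 0).

Definition Xt (Xs : (nat -> R) -> Prop) : Type := {v : nat -> R | Xs v}.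

Definition pd_kernel {T : Type} (k : T -> T -> R) : Prop :=
  (forall x y, k x y = k y x) /\
  (forall (n : nat) (xs : nat -> T) (c : nat -> R),
     0 <= sumR n (fun i => sumR n (fun j => c i * c j * k (xs i) (xs j)))).

Record is_RKHS {T : Type} (k : T -> T -> R) (H : (T -> R) -> Prop)
    (ip : (T -> R) -> (T -> R) -> R) : Prop := {
  rk_zero : H (fun _ => 0);
  rk_add : forall f g, H f -> H g -> H (fun x => f x + g x);
  rk_scal : forall (a : R) f, H f -> H (fun x => a * f x);
  rk_sym : forall f g, H f -> H g -> ip f g = ip g f;
  rk_ip_add : forall f g h, H f -> H g -> H h ->
      ip (fun x => f x + g x) h = ip f h + ip g h;
  rk_ip_scal : forall (a : R) f g, H f -> H g -> ip (fun x => a * f x) g = a * ip f g;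
  rk_pos : forall f, H f -> 0 <= ip f f;
  rk_def : forall f, H f -> ip f f = 0 -> forall x, f x = 0;
  rk_kmem : forall x, H (fun y => k y x);
  rk_reprod : forall f x, H f -> f x = ip f (fun y => k y x);
  rk_complete : forall u : nat -> T -> R, (forall n, H (u n)) ->
      (forall eps, 0 < eps -> exists N, forall m n, (N <= m)%nat -> (N <= n)%nat ->
          sqrt (ip (fun x => u m x - u n x) (fun x => u m x - u n x)) < eps) ->
      exists g, H g /\
        Un_cv (fun n => sqrt (ip (fun x => u n x - g x) (fun x => u n x - g x))) 0
}.

Definition rnorm {T : Type} (ip : (T -> R) -> (T -> R) -> R) (f : T -> R) : R :=
  sqrt (ip f f).

(** Square matrices as [nat -> nat -> R] (indices < n). *)
Definition minor (A : nat -> nat -> R) (i j : nat) : nat -> nat -> R :=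
  fun r c => A (if (r <? i)%nat then r else S r) (if (c <? j)%nat then c else S c).

Fixpoint det (n : nat) (A : nat -> nat -> R) : R :=
  match n with
  | O => 1
  | S m => sumR (S m) (fun j => (-1) ^ j * A 0%nat j * det m (minor A 0 j))
  end.

Definition invm (n : nat) (A : nat -> nat -> R) : nat -> nat -> R :=
  fun i j => (-1) ^ (i + j) * det (Nat.pred n) (minor A j i) / det n A.

(** Query points x_1, x_2, ... are [x 1], [x 2], ...; K_t has entries
    k(x_{i+1}, x_{j+1}) for i, j < t. *)
Definition Kmat {T : Type} (k : T -> T -> R) (x : nat -> T) : nat -> nat -> R :=
  fun i j => k (x (S i)) (x (S j)).

Definition post_mean {T : Type} (k : T -> T -> R) (x : nat -> T) (f : T -> R)
    (t : nat) (y : T) : R :=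
  sumR t (fun i => sumR t (fun j =>
    k y (x (S i)) * invm t (Kmat k x) i j * f (x (S j)))).

Definition post_var {T : Type} (k : T -> T -> R) (x : nat -> T) (t : nat) (y : T) : R :=
  k y y - sumR t (fun i => sumR t (fun j =>
    k y (x (S i)) * invm t (Kmat k x) i j * k y (x (S j)))).

Definition post_sd {T : Type} (k : T -> T -> R) (x : nat -> T) (t : nat) (y : T) : R :=
  sqrt (post_var k x t y).

(** Set of values 1/2 log det(I_T + sigma^{-2} K_T) over all z_1..z_T in X;
    gamma_T is its least upper bound (= its maximum when attained). *)
Definition info_set {T : Type} (k : T -> T -> R) (sigma : R) (n : nat) : R -> Prop :=
  fun g => exists z : nat -> T,
    g = / 2 * ln (det n (fun i j => (if Nat.eqb i j then 1 else 0) + / sigma ^ 2 * k (z i) (z j))).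

Definition cum_regret {T : Type} (f : T -> R) (xstar : T) (x : nat -> T) (n : nat) : R :=
  sumR n (fun i => f xstar - f (x (S i))).

Fixpoint max_val {T : Type} (f : T -> R) (x : nat -> T) (n : nat) : R :=
  match n with
  | O => f (x 1%nat)
  | S m => Rmax (max_val f x m) (f (x (S m)))
  end.

Definition simple_regret {T : Type} (f : T -> R) (xstar : T) (x : nat -> T) (n : nat) : R :=
  f xstar - max_val f x n.

(** Let B = ||f||_H and s_t = sigma_t^2(x_{t+1}) the posterior variance at the
   point queried at step t+1.  The proof has three ingredients.

   - Confidence bound: for every y, |f(y) - m_t(y)| <= B sigma_t(y) and
     0 <= sigma_t^2(y) <= k(y,y).  Indeed f(y) - m_t(y) = <f, g> and
     sigma_t^2(y) = <g, g> for g = k(.,y) - sum_j w_j k(.,x_j), so this is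
     Cauchy-Schwarz in the RKHS.  Together with the UCB rule it gives the
     instantaneous regret bound f(x* ) - f(x_{t+1}) <= 2 B sigma_t(x_{t+1}).
   - Determinant growth: writing I + c K_{t+1} as a 2x2 block matrix, the
     Schur complement and the inequality c v^T (I + cK)^{-1} v <= v^T K^{-1} v
     give det(I + c K_{t+1}) >= det(I + c K_t) (1 + c s_t), hence
     sum_t ln(1 + c s_t) <= ln det(I + c K_T) <= 2 gamma_T with c = sigma^{-2}.
   - Since s_t is in [0,1], concavity of ln gives s_t ln(1+c) <= ln(1+c s_t);
     Cauchy-Schwarz for finite sums then turns sum_t s_t <= 2 gamma_T / ln(1+c)
     into the two regret bounds. *)

From Stdlib Require Import Reals Lra Lia FunctionalExtensionality.
From mathcomp Require Import all_boot all_order all_algebra.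
From mathcomp Require Import Rstruct.
Import Order.TTheory GRing.Theory Num.Theory.
Set Implicit Arguments. Unset Strict Implicit. Unset Printing Implicit Defensive.

(** ** Finite sums and elementary real inequalities *)

Section FiniteSums.
Local Open Scope R_scope.

Lemma sumR_S n (f : nat -> R) : sumR n.+1 f = sumR n f + f n.
Proof. by []. Qed.

Lemma sumR_ext n (f g : nat -> R) :
  (forall i, (i < n)%N -> f i = g i) -> sumR n f = sumR n g.
Proof.
elim: n => [|n IH] h //=; rewrite IH; first by rewrite h.
by move=> i hi; apply: h; apply: ltnW.
Qed.

Lemma sumR_le n (f g : nat -> R) :
  (forall i, (i < n)%N -> f i <= g i) -> sumR n f <= sumR n g.
Proof.
elim: n => [|n IH] h /=; first lra.
apply: Rplus_le_compat; last exact: h.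
by apply: IH => i hi; apply: h; apply: ltnW.
Qed.

Lemma sumR_const n a : sumR n (fun _ => a) = INR n * a.
Proof. elim: n => [|n IH]; first by rewrite /=; ring. rewrite sumR_S IH S_INR; ring. Qed.

Lemma sumR_scal n a (f : nat -> R) : sumR n (fun i => a * f i) = a * sumR n f.
Proof. elim: n => [|n IH] /=; first ring. rewrite IH; ring. Qed.

Lemma sumR_ge0 n (f : nat -> R) : (forall i, (i < n)%N -> 0 <= f i) -> 0 <= sumR n f.
Proof. by move=> h; have := sumR_le h; rewrite sumR_const; lra. Qed.

Lemma sumR_add n (f g : nat -> R) : sumR n (fun i => f i + g i) = sumR n f + sumR n g.
Proof. by elim: n => [|n IH] /=; [ring | rewrite IH; ring]. Qed.

Lemma sumR_mulr n a (f : nat -> R) : sumR n (fun i => f i * a) = sumR n f * a.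
Proof. by elim: n => [|n IH] /=; [ring | rewrite IH; ring]. Qed.

Lemma sumR_exchange n m (F : nat -> nat -> R) :
  sumR n (fun i => sumR m (F i)) = sumR m (fun j => sumR n (fun i => F i j)).
Proof.
elim: n => [|n IH]; first by rewrite /= sumR_const Rmult_0_r.
by rewrite sumR_S IH -sumR_add.
Qed.

Lemma sumR_swap n (p q : nat -> R) (A : nat -> nat -> R) :
  sumR n (fun i => sumR n (fun j => p i * A i j * q j)) =
  sumR n (fun j => sumR n (fun i => p i * A i j) * q j).
Proof. by rewrite sumR_exchange; apply: sumR_ext => j _; rewrite sumR_mulr. Qed.

Lemma sumR_lagrange n (a : nat -> R) :
  INR n * sumR n (fun i => a i ^ 2) - (sumR n a) ^ 2 =
  sumR n (fun j => sumR j (fun i => (a i - a j) ^ 2)).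
Proof.
have sq_dev : forall m b, sumR m (fun i => (a i - b) ^ 2) =
    sumR m (fun i => a i ^ 2) - 2 * b * sumR m a + INR m * b ^ 2.
  by elim=> [|m IH] b; [rewrite /=; ring | rewrite !sumR_S IH S_INR; ring].
elim: n => [|n IH]; first by rewrite /=; ring.
rewrite !sumR_S -IH sq_dev S_INR; ring.
Qed.

Lemma sumR_le_sqrt_sumsq n (a : nat -> R) :
  (forall i, (i < n)%N -> 0 <= a i) ->
  sumR n a <= sqrt (INR n * sumR n (fun i => a i ^ 2)).
Proof.
move=> a0; rewrite -(sqrt_pow2 (sumR n a)); last exact: sumR_ge0.
apply: sqrt_le_1_alt.
have : 0 <= sumR n (fun j => sumR j (fun i => (a i - a j) ^ 2)).
  by apply: sumR_ge0 => j _; apply: sumR_ge0 => i _; apply: pow2_ge_0.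
rewrite -sumR_lagrange; lra.
Qed.

Lemma ln_le a b : 0 < a -> a <= b -> ln a <= ln b.
Proof.
move=> ha /Rle_lt_or_eq_dec [hab|->]; last exact: Rle_refl.
exact/Rlt_le/ln_increasing.
Qed.

Lemma ln_tangent z m : 0 < z -> 0 < m -> ln z <= ln m + (z - m) / m.
Proof.
move=> hz hm.
have zm : 0 < z / m by apply: Rdiv_lt_0_compat.
have -> : (z - m) / m = z / m - 1 by field; lra.
(* 1 + ln(z/m) <= exp(ln(z/m)) = z/m *)
have := exp_ineq1_le (ln (z / m)).
rewrite exp_ln // /Rdiv ln_mult ?ln_Rinv //; last exact: Rinv_0_lt_compat.
lra.
Qed.

(** Concavity of s |-> ln(1 + c s) on [0,1]: the chord lies below the graph.
    Average the tangent bounds at m = 1 + c s for z = 1 and z = 1 + c with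
    weights 1 - s and s; the linear terms cancel. *)
Lemma ln_chord s c : 0 <= s <= 1 -> 0 < c -> s * ln (1 + c) <= ln (1 + c * s).
Proof.
move=> hs hc.
have hm : 0 < 1 + c * s by nra.
have h1 := ln_tangent (Rlt_0_1) hm.
have h2 := ln_tangent (z := 1 + c) ltac:(lra) hm.
rewrite ln_1 in h1.
have h1' := Rmult_le_compat_l (1 - s) _ _ ltac:(lra) h1.
have h2' := Rmult_le_compat_l s _ _ ltac:(lra) h2.
have : (1 - s) * ((1 - (1 + c * s)) / (1 + c * s)) +
       s * ((1 + c - (1 + c * s)) / (1 + c * s)) = 0 by field; lra.
nra.
Qed.

End FiniteSums.

Section MatrixBridge.
Local Open Scope ring_scope.

Lemma sumR_big n (f : nat -> R) : sumR n f = \sum_(i < n) f i.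
Proof. by elim: n => [|n IH] /=; [rewrite big_ord0 | rewrite IH big_ord_recr]. Qed.

Definition mx n (A : nat -> nat -> R) : 'M[R]_n := \matrix_(i < n, j < n) A i j.

Lemma minor_mx m (A : nat -> nat -> R) (i j : 'I_m.+1) :
  row' i (col' j (mx m.+1 A)) = mx m (minor A i j).
Proof.
have ltb_ltn (a b : nat) : Nat.ltb a b = (a < b)%N.
  case: (Nat.ltb_spec a b) => h; apply/esym; first exact/ssrnat.ltP.
  by apply/negbTE/negP => /ssrnat.ltP; lia.
apply/matrixP => r c; rewrite !mxE /minor /= /bump !ltb_ltn.
by case: (ltnP r i) => hr; case: (ltnP c j) => hc; rewrite ?add0n ?add1n.
Qed.

Lemma m1pow j : pow (IZR (Zneg xH)) j = (-1) ^+ j.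
Proof. by rewrite RpowE. Qed.

Lemma det_mx n (A : nat -> nat -> R) : det n A = \det (mx n A).
Proof.
elim: n A => [|m IH] A; first by rewrite /= det_mx00.
rewrite [det _ _]/det -/det sumR_big (expand_det_row _ ord0).
apply: eq_bigr => j _.
rewrite IH -(minor_mx A ord0 j) /cofactor !mxE m1pow add0n.
by rewrite [RHS]mulrCA mulrA.
Qed.

Lemma mx_unit n (A : nat -> nat -> R) : det n A <> 0 -> mx n A \in unitmx.
Proof. by move=> hd; rewrite unitmxE unitfE -det_mx; apply/eqP. Qed.

Lemma invm_mx n (A : nat -> nat -> R) : det n A <> 0 ->
  mx n (invm n A) = invmx (mx n A).
Proof.
case: n => [|m] hd; first by apply/matrixP => [[]].
rewrite /invmx (mx_unit hd); apply/matrixP => i j; rewrite !mxE /invm.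
rewrite (det_mx m) -(minor_mx A j i) m1pow /cofactor addnC -det_mx.
by rewrite RdivE mulrC.
Qed.

Lemma sumR_quad n (p q : nat -> R) (A : nat -> nat -> R) :
  sumR n (fun i => sumR n (fun j => p i * A i j * q j)) =
  ((\col_(i < n) p i)^T *m mx n A *m \col_(j < n) q j) 0 0.
Proof.
rewrite sumR_big !mxE.
under eq_bigr do rewrite sumR_big.
under [RHS]eq_bigr => j _ do rewrite !mxE big_distrl /=.
rewrite exchange_big /=; apply: eq_bigr => i _; apply: eq_bigr => j _.
by rewrite !mxE.
Qed.

End MatrixBridge.

(** ** Schur complements and positive semidefinite matrices *)

Section PSDMatrices.
Local Open Scope ring_scope.
Variable F : realFieldType.

Lemma det_schur n (M : 'M[F]_n) (b : 'cV_n) (r : 'rV_n) (d : 'M_1) :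
  M \in unitmx -> \det (block_mx M b r d) = \det M * \det (d - r *m invmx M *m b).
Proof.
move=> uM.
have -> : block_mx M b r d = block_mx 1%:M 0 (r *m invmx M) 1%:M *m
     block_mx M b 0 (d - r *m invmx M *m b).
  rewrite mulmx_block !mul1mx !mul0mx !addr0 -mulmxA mulVmx // mulmx1.
  by rewrite addrC subrK.
by rewrite det_mulmx det_lblock det_ublock !det1 !mul1r.
Qed.

Definition psd n (P : 'M[F]_n) := forall u : 'cV_n, 0 <= (u^T *m P *m u) 0 0.

Lemma psd_gram n (w : 'cV[F]_n) : 0 <= (w^T *m w) 0 0.
Proof. by rewrite mxE; apply: sumr_ge0 => i _; rewrite mxE -expr2 sqr_ge0. Qed.

Section SymmetricInvertible.
Variables (n : nat) (P : 'M[F]_n).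
Hypotheses (sP : P^T = P) (uP : P \in unitmx) (pP : psd P).

Lemma quad_inv (w : 'cV_n) :
  w^T *m invmx P *m w = (invmx P *m w)^T *m P *m (invmx P *m w).
Proof.
rewrite trmx_mul trmx_inv sP -[w^T *m invmx P *m P]mulmxA mulVmx // mulmx1.
by rewrite mulmxA.
Qed.

Lemma psd_inv : psd (invmx P).
Proof. by move=> w; rewrite quad_inv; apply: pP. Qed.

(** For c > 0: c v^T (I + cP)^{-1} v <= v^T P^{-1} v.  Writing v = (I + cP) w,
    the left side is c(|w|^2 + c w^T P w) and the right side is
    w^T P^{-1} w + 2c |w|^2 + c^2 w^T P w. *)
Lemma quad_resolvent_le (v : 'cV_n) (c : F) :
  0 < c -> (1%:M + c *: P) \in unitmx ->
  c * (v^T *m invmx (1%:M + c *: P) *m v) 0 0 <= (v^T *m invmx P *m v) 0 0.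
Proof.
move=> c0; set M := 1%:M + c *: P => uM.
set w := invmx M *m v.
have hv : v = w + c *: (P *m w).
  by rewrite -[w in w + _]mul1mx scalemxAl -mulmxDl mulmxA mulmxV // mul1mx.
have lhs : v^T *m invmx M *m v = w^T *m w + c *: (w^T *m P *m w).
  by rewrite -mulmxA -/w {1}hv linearD linearZ /= (trmx_mul P) sP mulmxDl -scalemxAl.
have rhs : v^T *m invmx P *m v = w^T *m invmx P *m w
     + (c *: (w^T *m w)) *+ 2 + (c ^+ 2) *: (w^T *m P *m w).
  rewrite hv linearD linearZ /=.
  rewrite -[_ *m invmx P *m (P *m w)]mulmxA (mulmxA (invmx P)) mulVmx // mul1mx.
  rewrite linearD linearZ /= (trmx_mul P) sP !mulmxDl -!scalemxAl.
  rewrite -[w^T *m P *m invmx P]mulmxA mulmxV // mulmx1.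
  by rewrite scalerDr scalerA -expr2 mulr2n !addrA.
have h1 := pP (invmx P *m w); rewrite -quad_inv in h1.
have h2 := psd_gram w.
have h3 := pP w.
rewrite lhs rhs; move: h1 h2 h3.
move: (w^T *m w) (w^T *m P *m w) (w^T *m invmx P *m w) => A B C h1 h2 h3.
rewrite !mxE mulrDr mulrA -expr2 lerD2r.
have h4 : 0 <= c * A 0 0 by apply: mulr_ge0 => //; exact: ltW.
by apply: (le_trans (_ : _ <= c * A 0 0 + c * A 0 0)); rewrite ?lerDl ?lerDr.
Qed.

Lemma det_border_ge (v : 'cV_n) (a c : F) :
  0 < c -> 0 < \det (1%:M + c *: P) ->
  \det (1%:M + c *: P) * (1 + c * (a - (v^T *m invmx P *m v) 0 0)) <=
  \det (block_mx (1%:M + c *: P) (c *: v) (c *: v^T) (1 + c * a)%:M).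
Proof.
move=> c0 d0.
have uM : (1%:M + c *: P) \in unitmx by rewrite unitmxE unitfE gt_eqF.
rewrite det_schur // det_mx11.
have q := quad_resolvent_le v c0 uM.
have -> : c *: v^T *m invmx (1%:M + c *: P) *m (c *: v) =
   c ^+ 2 *: (v^T *m invmx (1%:M + c *: P) *m v).
  by rewrite -!scalemxAl -scalemxAr scalerA -expr2.
move: q d0; move: (v^T *m invmx (1%:M + c *: P) *m v) (v^T *m invmx P *m v) => A B.
move: (\det (1%:M + c *: P)) => D q d0.
rewrite !mxE /= mulr1n; apply: ler_wpM2l; first exact: ltW.
rewrite mulrBr addrA; apply: lerB => //.
by rewrite expr2 -mulrA; apply: ler_wpM2l => //; exact: ltW.
Qed.

End SymmetricInvertible.
End PSDMatrices.

(** ** Elementary Hilbert-space facts in an RKHS *)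

Arguments rk_zero {T k H ip}.
Arguments rk_add {T k H ip} _ {f g}.
Arguments rk_scal {T k H ip} _ a {f}.
Arguments rk_sym {T k H ip} _ {f g}.
Arguments rk_ip_add {T k H ip} _ {f g h}.
Arguments rk_ip_scal {T k H ip} _ a {f g}.
Arguments rk_pos {T k H ip} _ {f}.
Arguments rk_def {T k H ip} _ {f}.
Arguments rk_kmem {T k H ip} _ x.
Arguments rk_reprod {T k H ip} _ {f} x.

Section RKHSFacts.
Local Open Scope R_scope.
Variables (X : Type) (k : X -> X -> R) (H : (X -> R) -> Prop)
  (ip : (X -> R) -> (X -> R) -> R).
Hypothesis HH : is_RKHS k H ip.

Lemma ip0l g : H g -> ip (fun _ => 0) g = 0.
Proof.
move=> Hg; have := rk_ip_scal HH 0 Hg Hg.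
have -> : (fun x => 0 * g x) = (fun _ => 0) by apply: functional_extensionality => z; ring.
by move=> ->; ring.
Qed.

Lemma H_sum n (c : nat -> R) (h : nat -> X -> R) : (forall j, H (h j)) ->
  H (fun z => sumR n (fun j => c j * h j z)).
Proof.
move=> Hh; elim: n => [|n IH] /=; first exact: rk_zero HH.
exact: (rk_add HH IH (rk_scal HH (c n) (Hh n))).
Qed.

Lemma ip_sum n (c : nat -> R) (h : nat -> X -> R) g : (forall j, H (h j)) -> H g ->
  ip (fun z => sumR n (fun j => c j * h j z)) g = sumR n (fun j => c j * ip (h j) g).
Proof.
move=> Hh Hg; elim: n => [|n IH] /=; first exact: ip0l.
rewrite (rk_ip_add HH (H_sum n c Hh) (rk_scal HH (c n) (Hh n)) Hg).
by rewrite IH (rk_ip_scal HH (c n) (Hh n) Hg).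
Qed.

Lemma ip_comb u v a b : H u -> H v ->
  ip (fun z => u z + a * v z) (fun z => u z + b * v z) =
  ip u u + (a + b) * ip u v + a * b * ip v v.
Proof.
move=> Hu Hv.
have Hav : forall a, H (fun z => a * v z) by move=> c; exact (rk_scal HH c Hv).
have Huv : forall a, H (fun z => u z + a * v z) by move=> c; exact (rk_add HH Hu (Hav c)).
rewrite (rk_ip_add HH Hu (Hav a) (Huv b)) (rk_ip_scal HH a Hv (Huv b)).
rewrite (rk_sym HH Hu (Huv b)) (rk_sym HH Hv (Huv b)).
rewrite (rk_ip_add HH Hu (Hav b) Hu) (rk_ip_scal HH b Hv Hu).
rewrite (rk_ip_add HH Hu (Hav b) Hv) (rk_ip_scal HH b Hv Hv).
rewrite (rk_sym HH Hv Hu); ring.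
Qed.

Lemma ip_cauchy_schwarz u v : H u -> H v -> (ip u v) ^ 2 <= ip u u * ip v v.
Proof.
move=> Hu Hv.
have pu := rk_pos HH Hu.
case: (Rle_lt_or_eq_dec 0 (ip v v) (rk_pos HH Hv)) => hv.
  (* minimize <u + lam v, u + lam v> over lam *)
  set lam := - (ip u v) / ip v v.
  have := rk_pos HH (rk_add HH Hu (rk_scal HH lam Hv)).
  rewrite ip_comb // => h.
  have e : ip v v * (ip u u + (lam + lam) * ip u v + lam * lam * ip v v)
     = ip u u * ip v v - (ip u v) ^ 2 by rewrite /lam; field; lra.
  have := Rmult_le_pos _ _ (Rlt_le _ _ hv) h; rewrite e; lra.
have -> : v = (fun _ => 0).
  by apply: functional_extensionality => z; apply: (rk_def HH Hv); rewrite hv.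
rewrite (rk_sym HH Hu (rk_zero HH)) !ip0l //; [lra | exact: rk_zero HH].
Qed.

End RKHSFacts.

(** ** Kernel matrices and the posterior confidence bound *)

Section KernelMatrix.
Local Open Scope ring_scope.
Variables (X : Type) (k : X -> X -> R) (x : nat -> X).
Hypothesis hk : pd_kernel k.

Lemma Kmx_sym n : (mx n (Kmat k x))^T = mx n (Kmat k x).
Proof. by case: hk => hs _; apply/matrixP => i j; rewrite !mxE /Kmat hs. Qed.

Lemma Kmx_psd n : psd (mx n (Kmat k x)).
Proof.
case: hk => _ Hp u; case: n u => [|m] u; first by rewrite mxE big_ord0.
have := Hp m.+1 (fun i => x i.+1) (fun i => u (inord i) 0).
rewrite (@sumR_ext _ _ (fun i => sumR m.+1 (fun j =>
   u (inord i) 0 * Kmat k x i j * u (inord j) 0))); last first.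
  by move=> i _; apply: sumR_ext => j _; rewrite /Kmat -!RmultE; ring.
rewrite sumR_quad.
have -> : \col_(i < m.+1) u (inord i) 0 = u.
  by apply/matrixP => i j; rewrite mxE inord_val (ord1 j).
by move/RleP.
Qed.

Section Weights.
Variables (n : nat) (b : nat -> R).
Hypothesis hd : det n (Kmat k x) <> 0.

(** The weights w = K_n^{-1} b, with K_n symmetric. *)
Definition weights j := sumR n (fun i => b i * invm n (Kmat k x) i j).

Let K := mx n (Kmat k x).
Let bc := \col_(i < n) b i.

Lemma weights_col : \col_(j < n) weights j = invmx K *m bc.
Proof.
apply/matrixP => j z; rewrite (ord1 z) !mxE /weights sumR_big.
apply: eq_bigr => i _.
have sQ : (invmx K)^T = invmx K by rewrite trmx_inv Kmx_sym.
have := congr1 (fun M : 'M_n => M i j) (invm_mx hd); rewrite !mxE => ->.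
by rewrite -[invmx K in RHS]sQ mxE mulrC.
Qed.

Lemma weights_dot : sumR n (fun j => weights j * b j) = (bc^T *m invmx K *m bc) 0 0.
Proof. by rewrite -(invm_mx hd) -sumR_quad sumR_swap. Qed.

Lemma weights_gram :
  sumR n (fun j => weights j * sumR n (fun l => weights l * k (x j.+1) (x l.+1))) =
  sumR n (fun j => weights j * b j).
Proof.
have -> : sumR n (fun j => weights j * sumR n (fun l => weights l * k (x j.+1) (x l.+1))) =
    ((\col_(j < n) weights j)^T *m K *m (\col_(j < n) weights j)) 0 0.
  rewrite -sumR_quad; apply: sumR_ext => j _.
  rewrite !sumR_big mulr_sumr; apply: eq_bigr => l _.
  by rewrite /Kmat [weights l * _]mulrC mulrA.
rewrite weights_dot weights_col trmx_mul trmx_inv Kmx_sym.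
by rewrite -[bc^T *m invmx K *m K]mulmxA mulVmx ?mulmx1 ?mulmxA //; exact: mx_unit.
Qed.

Lemma weights_dot_ge0 : 0 <= sumR n (fun j => weights j * b j).
Proof. by rewrite weights_dot; apply: psd_inv; [exact: Kmx_sym | exact: mx_unit | exact: Kmx_psd]. Qed.

End Weights.
End KernelMatrix.

Section Posterior.
Local Open Scope R_scope.
Variables (X : Type) (k : X -> X -> R) (H : (X -> R) -> Prop)
  (ip : (X -> R) -> (X -> R) -> R) (x : nat -> X) (n : nat).
Hypotheses (HH : is_RKHS k H ip) (hk : pd_kernel k) (hd : det n (Kmat k x) <> 0).

Lemma post_var_weights y :
  post_var k x n y = k y y - sumR n (fun j => weights k x n (fun i => k y (x i.+1)) j * k y (x j.+1)).
Proof. by rewrite /post_var sumR_swap. Qed.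

Lemma post_var_le y : post_var k x n y <= k y y.
Proof.
have : 0 <= sumR n (fun j => weights k x n (fun i => k y (x i.+1)) j * k y (x j.+1)).
  by apply/RleP; exact: weights_dot_ge0.
by rewrite post_var_weights; lra.
Qed.

(** The residual g = k(., y) - sum_j w_j k(., x_j) represents the posterior
    error functional h |-> h(y) - m_n(y), and its squared norm is sigma_n^2(y). *)
Lemma posterior_residual y : exists g, H g /\
  (forall h, H h -> ip h g = h y - post_mean k x h n y) /\ ip g g = post_var k x n y.
Proof.
set w := weights k x n (fun i => k y (x i.+1)).
pose kx := fun j z => k z (x j.+1).
have Hkx : forall j, H (kx j) by move=> j; exact (rk_kmem HH (x j.+1)).
pose S := fun z => sumR n (fun j => w j * kx j z).
have HS : H S by exact (H_sum HH n w Hkx).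
have Hy : H (fun z => k z y) by exact (rk_kmem HH y).
exists (fun z => k z y + (-1) * S z).
split; first exact (rk_add HH Hy (rk_scal HH (-1) HS)).
split.
  move=> h Hh; rewrite (rk_sym HH Hh (rk_add HH Hy (rk_scal HH (-1) HS))).
  rewrite (rk_ip_add HH Hy (rk_scal HH (-1) HS) Hh) (rk_ip_scal HH (-1) HS Hh).
  rewrite (ip_sum HH n w Hkx Hh) (rk_sym HH Hy Hh) -(rk_reprod HH y Hh).
  have -> : post_mean k x h n y = sumR n (fun j => w j * h (x j.+1)).
    by rewrite /post_mean sumR_swap.
  rewrite (@sumR_ext n _ (fun j => w j * h (x j.+1))); first ring.
  by move=> j _; rewrite (rk_sym HH (Hkx j) Hh) -(rk_reprod HH _ Hh).
have kyky : ip (fun z => k z y) (fun z => k z y) = k y y by rewrite -(rk_reprod HH y Hy).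
have kyS : ip (fun z => k z y) S = sumR n (fun j => w j * k y (x j.+1)).
  rewrite (rk_sym HH Hy HS) (ip_sum HH n w Hkx Hy).
  by apply: sumR_ext => j _; rewrite -(rk_reprod HH y (Hkx j)).
have SS : ip S S = sumR n (fun j => w j * k y (x j.+1)).
  transitivity (sumR n (fun j => w j * sumR n (fun l => w l * k (x j.+1) (x l.+1))));
    last exact (weights_gram hk _ hd).
  rewrite {1}/S (ip_sum HH n w Hkx HS); apply: sumR_ext => j _.
  rewrite (rk_sym HH (Hkx j) HS) (ip_sum HH n w Hkx (Hkx j)).
  by congr (_ * _); apply: sumR_ext => l _; rewrite -(rk_reprod HH _ (Hkx l)).
rewrite (ip_comb HH (-1) (-1) Hy HS) kyky kyS SS post_var_weights -/w; ring.
Qed.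

Lemma post_var_ge0 y : 0 <= post_var k x n y.
Proof. by have [g [Hg [_ <-]]] := posterior_residual y; exact (rk_pos HH Hg). Qed.

Lemma post_confidence f y : H f ->
  Rabs (f y - post_mean k x f n y) <= rnorm ip f * post_sd k x n y.
Proof.
move=> Hf; have [g [Hg [hres hvar]]] := posterior_residual y.
have := ip_cauchy_schwarz HH Hf Hg; rewrite hres // hvar => cs.
rewrite /rnorm /post_sd -sqrt_mult; [|exact (rk_pos HH Hf)|exact: post_var_ge0].
rewrite -sqrt_Rsqr_abs; apply: sqrt_le_1_alt.
by rewrite /Rsqr; move: cs; rewrite /pow Rmult_1_r.
Qed.

End Posterior.

(** ** Growth of det(I + c K_t) *)

Definition regK (X : Type) (k : X -> X -> R) (x : nat -> X) (c : R) :=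
  fun i j => (if Nat.eqb i j then 1 else 0) + c * k (x i.+1) (x j.+1).

Section RegularizedKernel.
Local Open Scope ring_scope.
Variables (X : Type) (k : X -> X -> R) (x : nat -> X) (c : R).
Hypothesis hk : pd_kernel k.

Lemma eqb_eqn (a b : nat) : Nat.eqb a b = (a == b).
Proof. by case: (Nat.eqb_spec a b) => h; apply/esym; apply/eqP. Qed.

Lemma regK_mx n : mx n (regK k x c) = 1%:M + c *: mx n (Kmat k x).
Proof.
apply/matrixP => i j; rewrite !mxE /regK eqb_eqn.
by have -> : ((i : nat) == j) = (i == j) by []; case: (i == j).
Qed.

Lemma regK_block n (v := \col_(i < n) k (x n.+1) (x i.+1)) :
  mx (n + 1) (regK k x c) =
  block_mx (1%:M + c *: mx n (Kmat k x)) (c *: v) (c *: v^T)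
           (1 + c * k (x n.+1) (x n.+1))%:M.
Proof.
case: hk => hs _; rewrite /v; apply/matrixP => i j; rewrite !mxE.
case: (splitP i) => i' hi; rewrite !mxE; case: (splitP j) => j' hj;
  rewrite !mxE /regK hi hj eqb_eqn.
- by have -> : ((i' : nat) == j') = (i' == j') by []; case: (i' == j').
- by rewrite (ord1 j') addn0 (ltn_eqF (ltn_ord i')) Rplus_0_l hs.
- by rewrite (ord1 i') addn0 (gtn_eqF (ltn_ord j')) Rplus_0_l.
- by rewrite (ord1 i') (ord1 j') addn0 eqxx.
Qed.

Lemma det_regK_step n :
  0 < c -> det n (Kmat k x) <> 0 -> 0 < det n (regK k x c) ->
  det n (regK k x c) * (1 + c * post_var k x n (x n.+1)) <= det n.+1 (regK k x c).
Proof.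
move=> c0 hd hD; rewrite -[in det n.+1 _]addn1 !det_mx regK_block regK_mx.
rewrite det_mx regK_mx in hD.
have -> : post_var k x n (x n.+1) = k (x n.+1) (x n.+1) -
   ((\col_(i < n) k (x n.+1) (x i.+1))^T *m invmx (mx n (Kmat k x)) *m
     (\col_(i < n) k (x n.+1) (x i.+1))) 0 0.
  by rewrite /post_var sumR_quad invm_mx.
by apply: det_border_ge => //; [exact: Kmx_sym | exact: mx_unit | exact: Kmx_psd].
Qed.

End RegularizedKernel.

(** ** Regret of the UCB rule *)

Section Regret.
Local Open Scope R_scope.
Variables (X : Type) (k : X -> X -> R) (H : (X -> R) -> Prop)
  (ip : (X -> R) -> (X -> R) -> R) (x : nat -> X).
Hypotheses (HH : is_RKHS k H ip) (hk : pd_kernel k).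

Definition query_var (t : nat) : R := post_var k x t (x t.+1).

Section LogDet.
Variable c : R.
Hypothesis c0 : 0 < c.

Lemma logdet_lower n : (forall t, (t < n)%N -> det t (Kmat k x) <> 0) ->
  0 < det n (regK k x c) /\
  sumR n (fun t => ln (1 + c * query_var t)) <= ln (det n (regK k x c)).
Proof.
elim: n => [|n IH] hd; first by rewrite /= ln_1; split; lra.
have [pos IHs] := IH (fun t ht => hd t (ltnW ht)).
have hdn := hd n (ltnSn n).
have s0 := post_var_ge0 HH hk hdn (x n.+1).
have pos1 : 0 < 1 + c * query_var n by rewrite /query_var; nra.
have step : det n (regK k x c) * (1 + c * query_var n) <= det n.+1 (regK k x c).
  by apply/RleP; apply: det_regK_step => //; apply/RltP.
have posM := Rmult_lt_0_compat _ _ pos pos1.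
split; first exact: Rlt_le_trans posM step.
rewrite sumR_S; apply: Rle_trans (ln_le posM step).
by rewrite ln_mult //; lra.
Qed.

(** With k(y,y) <= 1 each s_t lies in [0,1], so by concavity of ln
    ln(1 + c) sum_t s_t <= ln det(I + c K_n). *)
Lemma sum_query_var_le n : (forall y, k y y <= 1) ->
  (forall t, (t < n)%N -> det t (Kmat k x) <> 0) ->
  ln (1 + c) * sumR n query_var <= ln (det n (regK k x c)).
Proof.
move=> hk1 hd; apply: Rle_trans (proj2 (logdet_lower hd)).
rewrite -sumR_scal; apply: sumR_le => t ht; rewrite Rmult_comm; apply: ln_chord => //.
split; first exact: post_var_ge0 HH hk (hd t ht) _.
exact: Rle_trans (post_var_le hk (hd t ht) _) (hk1 _).
Qed.

End LogDet.

(** A UCB step has instantaneous regret at most 2 ||f|| sigma_t(x_{t+1}):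
    f(x* ) <= UCB_t(x* ) <= UCB_t(x_{t+1}) <= f(x_{t+1}) + 2 ||f|| sigma_t(x_{t+1}). *)
Lemma ucb_instant_regret f xstar t : H f -> det t (Kmat k x) <> 0 ->
  post_mean k x f t xstar + rnorm ip f * post_sd k x t xstar <=
    post_mean k x f t (x t.+1) + rnorm ip f * post_sd k x t (x t.+1) ->
  f xstar - f (x t.+1) <= 2 * rnorm ip f * post_sd k x t (x t.+1).
Proof.
move=> Hf hd ucb.
have := Rle_abs (f xstar - post_mean k x f t xstar).
have := post_confidence HH hk hd xstar Hf.
have := Rle_abs (post_mean k x f t (x t.+1) - f (x t.+1)).
rewrite Rabs_minus_sym.
have := post_confidence HH hk hd (x t.+1) Hf.
lra.
Qed.

(** Summing the instantaneous bounds and applying Cauchy-Schwarz: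
    R_n <= 2 ||f|| sum_t sigma_t(x_{t+1}) <= 2 ||f|| sqrt(n sum_t s_t). *)
Lemma cum_regret_ucb f xstar n : H f ->
  (forall t, (t < n)%N -> det t (Kmat k x) <> 0) ->
  (forall t, (t < n)%N ->
    post_mean k x f t xstar + rnorm ip f * post_sd k x t xstar <=
    post_mean k x f t (x t.+1) + rnorm ip f * post_sd k x t (x t.+1)) ->
  cum_regret f xstar x n <= 2 * rnorm ip f * sqrt (INR n * sumR n query_var).
Proof.
move=> Hf hd ucb.
have -> : sumR n query_var = sumR n (fun t => post_sd k x t (x t.+1) ^ 2).
  apply: sumR_ext => t ht; rewrite /post_sd pow2_sqrt //.
  exact: post_var_ge0 HH hk (hd t ht) _.
apply: (@Rle_trans _ (2 * rnorm ip f * sumR n (fun t => post_sd k x t (x t.+1)))).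
  rewrite /cum_regret -sumR_scal; apply: sumR_le => t ht.
  exact: ucb_instant_regret Hf (hd t ht) (ucb t ht).
apply: Rmult_le_compat_l; first by have := sqrt_pos (ip f f); rewrite /rnorm; lra.
by apply: sumR_le_sqrt_sumsq => t _; apply: sqrt_pos.
Qed.

End Regret.

Section SimpleRegret.
Local Open Scope R_scope.

Lemma max_val_ge (X : Type) (f : X -> R) (x : nat -> X) n i :
  (i < n)%N -> f (x i.+1) <= max_val f x n.
Proof.
elim: n => [|n IH] // hi /=.
case: (ltnP i n) => h; first exact: Rle_trans (IH h) (Rmax_l _ _).
have -> : i = n by apply/eqP; rewrite eqn_leq h -ltnS hi.
exact: Rmax_r.
Qed.

Lemma simple_regret_le_avg (X : Type) (f : X -> R) xstar (x : nat -> X) n :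
  INR n * simple_regret f xstar x n <= cum_regret f xstar x n.
Proof.
rewrite /simple_regret /cum_regret -sumR_const; apply: sumR_le => i hi.
by have := max_val_ge f x hi; lra.
Qed.

End SimpleRegret.

Section Arithmetic.
Local Open Scope R_scope.

Lemma regret_arith (n : nat) (B L gamma V Rc Rs : R) :
  0 < INR n -> 0 < L -> 0 <= B -> 0 <= V ->
  Rc <= 2 * B * sqrt (INR n * V) -> L * V <= 2 * gamma ->
  INR n * Rs <= Rc ->
  Rc <= B * sqrt (INR n * (8 / L) * gamma) /\ Rs <= B * sqrt (8 / L * gamma / INR n).
Proof.
move=> n0 L0 B0 V0 hR hV hS.
have g0 : 0 <= gamma by nra.
have hVL : V <= 2 * gamma / L.
  apply: (Rmult_le_reg_l L) => //.
  by have -> : L * (2 * gamma / L) = 2 * gamma by field; lra.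
have hRc : Rc <= B * sqrt (INR n * (8 / L) * gamma).
  have -> : INR n * (8 / L) * gamma = 2 ^ 2 * (INR n * (2 * gamma / L)) by field; lra.
  rewrite sqrt_mult_alt ?sqrt_pow2; [|lra|lra].
  apply: Rle_trans hR _; rewrite -Rmult_assoc (Rmult_comm B); apply: Rmult_le_compat_l; first lra.
  by apply: sqrt_le_1_alt; apply: Rmult_le_compat_l; lra.
split => //.
have e : INR n * (8 / L) * gamma = INR n ^ 2 * (8 / L * gamma / INR n) by field; lra.
rewrite e sqrt_mult_alt ?sqrt_pow2 in hRc; [|lra|exact: pow2_ge_0].
apply: (Rmult_le_reg_l (INR n)) => //; nra.
Qed.

End Arithmetic.

Open Scope R_scope.

Theorem theorem1
  (d : nat) (Xs : (nat -> R) -> Prop) (HX : compact_Rd d Xs)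
  (k : Xt Xs -> Xt Xs -> R) (Hk : pd_kernel k) (Hk1 : forall x, k x x <= 1)
  (H : (Xt Xs -> R) -> Prop) (ip : (Xt Xs -> R) -> (Xt Xs -> R) -> R)
  (HH : is_RKHS k H ip)
  (f : Xt Xs -> R) (Hf : H f)
  (T : nat) (HT : (le 1 T))
  (x : nat -> Xt Xs)
  (Hinv : forall t, (le 1 t /\ le t T) -> det t (Kmat k x) <> 0)
  (Halg : forall t, (le 1 t /\ le t T) -> forall y : Xt Xs,
      post_mean k x f (Nat.sub t 1) y + rnorm ip f * post_sd k x (Nat.sub t 1) y
      <= post_mean k x f (Nat.sub t 1) (x t) + rnorm ip f * post_sd k x (Nat.sub t 1) (x t))
  (xstar : Xt Xs) (Hxstar : forall y : Xt Xs, f y <= f xstar)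
  (sigma : R) (Hsigma : 0 < sigma)
  (gammaT : R) (Hgamma : is_lub (info_set k sigma T) gammaT) :
  let C1 := 8 / ln (1 + / sigma ^ 2) in
  cum_regret f xstar x T <= rnorm ip f * sqrt (INR T * C1 * gammaT) /\
  simple_regret f xstar x T <= rnorm ip f * sqrt (C1 * gammaT / INR T).
Proof.
rewrite /=; set c := / sigma ^ 2.
have c0 : 0 < c by apply/Rinv_0_lt_compat/pow_lt.
have hd : forall t, (t < T)%N -> det t (Kmat k x) <> 0.
  case=> [|t] ht; first by rewrite /=; lra.
  by apply: Hinv; move/ssrnat.ltP: ht; lia.
have ucb : forall t, (t < T)%N -> forall y,
    post_mean k x f t y + rnorm ip f * post_sd k x t y <=
    post_mean k x f t (x t.+1) + rnorm ip f * post_sd k x t (x t.+1).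
  move=> t /ssrnat.ltP ht y; have := Halg t.+1 ltac:(lia) y.
  by have -> : Nat.sub t.+1 1 = t by lia.
(* gamma_T bounds the information gain of the actual queries x_1, ..., x_T *)
have info : / 2 * ln (det T (regK k x c)) <= gammaT.
  by apply: (proj1 Hgamma); exists (fun i => x i.+1).
have hvar := sum_query_var_le HH Hk c0 Hk1 hd.
apply: (regret_arith (V := sumR T (query_var k x))).
- by apply: lt_0_INR; lia.
- by rewrite -ln_1; apply: ln_increasing; lra.
- exact: sqrt_pos.
- by apply: sumR_ge0 => t ht; exact: post_var_ge0 HH Hk (hd t ht) _.
- exact: (cum_regret_ucb HH Hk Hf hd (fun t ht => ucb t ht xstar)).
- lra.
- exact: simple_regret_le_avg.
Qed.
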